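(* Let $W=\langle s_0,\dots,s_{n-1}\rangle$ be a finite string C-group, $\mathcal{P}(W)$ the regular polytope with automorphism group $W$, and $N\le W$ such that $\mathcal{P}(W)/N$ is a polytope admitting the flag action of $W$, with $N$ the stabilizer of the base flag $\Phi$. Let $u_1=1,u_2,\dots,u_r\in W$ be chosen so that the flags $\Phi^{u_1},\dots,\Phi^{u_r}$ are representatives of the $r$ orbits of the automorphism group of $\mathcal{P}(W)/N$ on its flags. Let $\sigma_1,\dots,\sigma_t$ be the distinct Coxeter elements of $W$, and let $m_{j,l}=|\{\Phi^{u_j}\alpha : \alpha\in\langle\sigma_l\rangle\}|$, the size of the orbit of $\Phi^{u_j}$ under the flag action of $\langle\sigma_l\rangle$. For $0\le i\le n-1$ let $H_i=\langle s_k : k\ne i\rangle$. If $(\sigma_l)^kH_i\cap N^{u_j}=\emptyset$ for all $i$, $j$, $l$ and all $1\le k<m_{j,l}$, then $\mathcal{P}(W)/N$ has acoptic Petrie schemes.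
   Context: Abstract polytopes are graded posets with least and greatest faces, all flags of equal length, strongly connected, satisfying the diamond condition. A string C-group is generated by distinct involutions $s_0,\dots,s_{n-1}$ with $(s_is_j)^2=1$ for $|i-j|>1$ and the intersection property. The flag action of $W$ on a polytope sends a flag $\Phi$ under $s_i$ to the unique flag $\Phi^{s_i}$ differing from $\Phi$ only in its face of rank $i$ (assumed to extend to a well-defined right action). A Coxeter element of $W$ is a product of the generators $s_0,\dots,s_{n-1}$ in which each generator appears exactly once (in some order). The exchange map $\varrho_i$ sends each flag to the flag differing from it only in rank $i$; a Petrie map $\sigma$ is a composition of $\varrho_0,\dots,\varrho_{n-1}$ with each appearing exactly once (e.g. the flag action of a Coxeter element). A Petrie sequence is a sequence of flags $(\dots,\Phi\sigma^{-1},\Phi,\Phi\sigma,\Phi\sigma^2,\dots)$ for a fixed Petrie map $\sigma$ and flag $\Phi$; its Petrie scheme is its shortest cyclic listing if the sequence is periodic, and the sequence itself otherwise. A polytope has acoptic Petrie schemes if each proper face (face other than the least and greatest) appears at most once in each Petrie scheme, i.e. among the flags of a Petrie scheme no proper face occurs in two different positions. $N^{u}=u^{-1}Nu$. *)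

From HB Require Import structures.
From mathcomp Require Import all_boot all_fingroup.

Set Implicit Arguments.
Unset Strict Implicit.
Unset Printing Implicit Defensive.

Local Open Scope group_scope.

Definition string_C_group (gT : finGroupType) (W : {group gT}) (n : nat)
    (s : 'I_n -> gT) : Prop :=
  [/\ W :=: <<[set s i | i : 'I_n]>>,
      injective s,
      (forall i, s i != 1 /\ s i ^+ 2 = 1),
      (forall i j : 'I_n, ((i.+1 < j) || (j.+1 < i))%N -> (s i * s j) ^+ 2 = 1)
    & (forall I J : {set 'I_n},
         <<[set s i | i in I]>> :&: <<[set s i | i in J]>>
         = <<[set s i | i in I :&: J]>>)].

Definition Hgen (gT : finGroupType) (n : nat) (s : 'I_n -> gT) (i : nat)
  : {set gT} := <<[set s k | k : 'I_n & val k != i]>>.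

Definition coxeter (gT : finGroupType) (n : nat) (s : 'I_n -> gT) (c : gT)
  : Prop := exists p : {perm 'I_n}, c = \prod_(k < n) s (p k).

(* D = the faces, le = the partial order, rk = rank shifted by one    *)
(* (least face has rk 0, greatest face has rk n.+1 for an n-polytope). *)

Section AbstractPolytope.
Local Close Scope group_scope.
Variables (F : finType) (D : pred F) (le : rel F) (rk : F -> nat).

Definition is_chain (Psi : {set F}) : bool :=
  [forall x in Psi, forall y in Psi, le x y || le y x].

Definition is_flag (Psi : {set F}) : bool :=
  [&& [forall x in Psi, D x], is_chain Psi &
      [forall x, (D x && [forall y in Psi, le x y || le y x]) ==> (x \in Psi)]].

Definition comparable_rel : rel F := fun x y => le x y || le y x.

Definition is_polytope (n : nat) : Prop :=
  (forall x, D x -> le x x) /\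
  (forall x y, D x -> D y -> le x y -> le y x -> x = y) /\
  (forall x y z, D x -> D y -> D z -> le x y -> le y z -> le x z) /\
  (exists2 x, D x & forall y, D y -> le x y) /\
  (exists2 y, D y & forall x, D x -> le x y) /\
  (forall x, D x -> (rk x <= n.+1)%N) /\
  (forall x y, D x -> D y -> le x y -> x != y -> (rk x < rk y)%N) /\
  (forall Psi, is_flag Psi -> forall r, (r <= n.+1)%N ->
      #|[set x in Psi | rk x == r]| = 1%N) /\
  (forall x y, D x -> D y -> le x y -> (rk x + 3 <= rk y)%N ->
     forall a b,
       [&& D a, le x a, le a y, a != x & a != y] ->
       [&& D b, le x b, le b y, b != x & b != y] ->
       exists p : seq F,
         [/\ path comparable_rel a p, last a p = b &
             all (fun z => [&& D z, le x z, le z y, z != x & z != y]) p]) /\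
  (forall x y, D x -> D y -> le x y -> rk y = (rk x).+2 ->
     #|[set z | [&& D z, le x z, le z y, z != x & z != y]]| = 2%N).

(* the exchange map rho_i (i is the paper's rank, i.e. rk = i.+1):
   the flag differing from Psi only in its face of rank i *)
Definition exch (i : nat) (Psi : {set F}) : {set F} :=
  odflt Psi [pick Psi' : {set F} | [&& is_flag Psi', Psi' != Psi &
       [forall x, (rk x != i.+1) ==> ((x \in Psi') == (x \in Psi))]]].

Definition petrie (n : nat) (p : {perm 'I_n}) (Psi : {set F}) : {set F} :=
  foldl (fun Phi k => exch (val (p k)) Phi) Psi (enum 'I_n).

(* acoptic Petrie schemes: no proper face occurs at two different
   positions k < k' of the (shortest cyclic listing of the) Petrie sequence;
   positions k < k' lie in the shortest cyclic listing iff k' is smaller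
   than the period, i.e. no 0 < m <= k' has sigma^m Psi = Psi. *)
Definition acoptic (n : nat) : Prop :=
  forall Psi, is_flag Psi -> forall p : {perm 'I_n}, forall k k',
    (k < k')%N ->
    (forall m, (0 < m <= k')%N -> iter m (petrie p) Psi != Psi) ->
    forall x, D x -> (0 < rk x <= n)%N ->
      x \in iter k (petrie p) Psi -> x \in iter k' (petrie p) Psi -> False.

Definition is_aut (f : F -> F) : Prop :=
  [/\ {in D &, injective f},
      (forall x, D x -> D (f x)),
      (forall y, D y -> exists2 x, D x & f x = y)
    & (forall x y, D x -> D y -> le (f x) (f y) = le x y)].

Definition same_aut_orbit (Psi Psi' : {set F}) : Prop :=
  exists2 f, is_aut f & f @: Psi = Psi'.

End AbstractPolytope.

(* The quotient P(W)/N in the coset model: faces of rank i (0<=i<n)   *)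
(* are the double cosets N w H_i (w in W); the least and greatest     *)
(* faces correspond to H_{-1} = H_n = W.  A face is encoded as the    *)
(* pair (i+1, N w H_i), with (0, W) and (n+1, W) the improper faces.  *)

Definition qface (gT : finGroupType) (n : nat) := ('I_n.+2 * {set gT})%type.

Section Quotient.
Variables (gT : finGroupType) (n : nat) (W N : {group gT}) (s : 'I_n -> gT).

Definition Hr (r : 'I_n.+2) : {set gT} :=
  if (0 < r <= n)%N then Hgen s r.-1 else W.

Definition faceset (r : 'I_n.+2) (w : gT) : {set gT} := (N :* w) * Hr r.

Definition qD : pred (qface gT n) :=
  fun f => [exists w in W, f.2 == faceset f.1 w].

Definition qle : rel (qface gT n) :=
  fun f g => (f.1 <= g.1)%N &&
    [exists w in W, (f.2 == faceset f.1 w) && (g.2 == faceset g.1 w)].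

Definition qrk (f : qface gT n) : nat := val f.1.

Definition base_flag : {set qface gT n} :=
  [set f : qface gT n | f.2 == faceset f.1 1].

Definition flag_action (act : {set qface gT n} -> gT -> {set qface gT n})
  : Prop :=
  [/\ (forall Psi w, is_flag qD qle Psi -> w \in W -> is_flag qD qle (act Psi w)),
      (forall Psi, is_flag qD qle Psi -> act Psi 1 = Psi),
      (forall Psi v w, is_flag qD qle Psi -> v \in W -> w \in W ->
          act Psi (v * w) = act (act Psi v) w)
    & (forall Psi (i : 'I_n), is_flag qD qle Psi ->
          act Psi (s i) = exch qD qle qrk i Psi)].

End Quotient.

(* In the coset model the flag Phi^w consists of the faces N w H_r: by induction
   on a word for w, since Phi^(w s_k) is the k-adjacent flag of Phi^w and
   N w s_k H_k <> N w H_k.  A Petrie sequence is an orbit of a Coxeter element c;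
   moving it by an automorphism onto the orbit representative Phi^(u_j), a proper
   face of rank i+1 repeated at distance d, 0 < d < m_(j,l), becomes a face
   shared by Phi^(u_j) and Phi^(u_j c^d).  Then N u_j H_i = N u_j c^d H_i, which
   puts an element of c^d H_i into N^(u_j), against the hypothesis. *)

From Pilot Require Import Defs.
From HB Require Import structures.
From mathcomp Require Import all_boot all_fingroup.

Set Implicit Arguments.
Unset Strict Implicit.
Unset Printing Implicit Defensive.

Lemma cards2_other (T : finType) (S : {set T}) a :
  #|S| = 2 -> a \in S -> exists2 b, b \in S & b != a.
Proof.
case/eqP/cards2P => [b [c [nbc ->]]]; rewrite !inE => /orP[]/eqP->.
  by exists c; rewrite ?inE ?eqxx ?orbT // eq_sym.
by exists b; rewrite ?inE ?eqxx.
Qed.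

Lemma cards2_neq_eq (T : finType) (S : {set T}) a b c :
  #|S| = 2 -> a \in S -> b \in S -> c \in S -> a != b -> a != c -> b = c.
Proof.
case/eqP/cards2P => [p [q [_ ->]]]; rewrite !inE.
by case/orP=> /eqP->; case/orP=> /eqP->; case/orP=> /eqP->; rewrite ?eqxx // eq_sym.
Qed.

Section Polytope.
Variables (F : finType) (D : pred F) (le : rel F) (rk : F -> nat) (n : nat).
Hypothesis polyP : is_polytope D le rk n.

Local Notation flag := (is_flag D le).

Lemma poly_le_refl x : D x -> le x x.
Proof. by case: polyP => + _; apply. Qed.

Lemma poly_le_anti x y : D x -> D y -> le x y -> le y x -> x = y.
Proof. by case: polyP => _ [+ _]; apply. Qed.

Lemma poly_le_trans x y z : D x -> D y -> D z -> le x y -> le y z -> le x z.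
Proof. by case: polyP => _ [_ [+ _]]; apply. Qed.

Lemma poly_rk_le x : D x -> rk x <= n.+1.
Proof. by case: polyP => _ [_ [_ [_ [_ [+ _]]]]]; apply. Qed.

Lemma poly_rk_lt x y : D x -> D y -> le x y -> x != y -> rk x < rk y.
Proof. by case: polyP => _ [_ [_ [_ [_ [_ [+ _]]]]]]; apply. Qed.

Lemma poly_flag_rk_card Psi r : flag Psi -> r <= n.+1 ->
  #|[set x in Psi | rk x == r]| = 1.
Proof. by case: polyP => _ [_ [_ [_ [_ [_ [_ [card1 _]]]]]]] /card1; apply. Qed.

Lemma poly_diamond x y : D x -> D y -> le x y -> rk y = (rk x).+2 ->
  #|[set z | [&& D z, le x z, le z y, z != x & z != y]]| = 2.
Proof. by case: polyP => _ [_ [_ [_ [_ [_ [_ [_ [_ +]]]]]]]]; apply. Qed.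

Lemma flag_face Psi x : flag Psi -> x \in Psi -> D x.
Proof. by case/and3P => /forall_inP + _ _; apply. Qed.

Lemma flag_comparable Psi x y : flag Psi -> x \in Psi -> y \in Psi ->
  le x y || le y x.
Proof. by case/and3P => _ /forall_inP + _ xPsi => /(_ x xPsi)/forall_inP; apply. Qed.

Lemma flag_maximal Psi x : flag Psi -> D x ->
  (forall y, y \in Psi -> le x y || le y x) -> x \in Psi.
Proof.
case/and3P => _ _ /forallP maxPsi Dx cmpx.
by have /implyP := maxPsi x; apply; rewrite Dx; apply/forall_inP.
Qed.

Lemma comparable_le x y : D x -> D y -> le x y || le y x -> rk x <= rk y ->
  le x y.
Proof.
move=> Dx Dy /orP[//|leyx] lerk.
have [->|nyx] := eqVneq y x; first exact: poly_le_refl.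
by have := poly_rk_lt Dy Dx leyx nyx; rewrite ltnNge lerk.
Qed.

Lemma comparable_rk_inj x y : D x -> D y -> le x y || le y x -> rk x = rk y ->
  x = y.
Proof.
move=> Dx Dy cmp erk; apply: poly_le_anti => //.
  by apply: comparable_le; rewrite ?erk.
by apply: comparable_le; rewrite 1?orbC ?erk.
Qed.

Lemma flag_rk_inj Psi x y : flag Psi -> x \in Psi -> y \in Psi ->
  rk x = rk y -> x = y.
Proof.
move=> flagPsi xPsi yPsi.
apply: comparable_rk_inj (flag_face flagPsi xPsi) (flag_face flagPsi yPsi) _.
exact: flag_comparable flagPsi xPsi yPsi.
Qed.

Lemma flag_face_rk Psi r : flag Psi -> r <= n.+1 -> exists2 x, x \in Psi & rk x = r.
Proof.
move=> flagPsi ler; have /card_gt0P[x] : 0 < #|[set x in Psi | rk x == r]|.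
  by rewrite poly_flag_rk_card.
by rewrite inE => /andP[xPsi /eqP]; exists x.
Qed.

(* Maximality comes for free: a face comparable with the whole chain is
   comparable with, hence equal to, the chain's face of the same rank. *)
Lemma chain_flag (Psi : {set F}) : (forall x, x \in Psi -> D x) ->
  (forall x y, x \in Psi -> y \in Psi -> le x y || le y x) ->
  (forall r, r <= n.+1 -> exists2 x, x \in Psi & rk x = r) -> flag Psi.
Proof.
move=> facePsi chainPsi rkPsi; apply/and3P; split.
- by apply/forall_inP.
- by apply/forall_inP => x xPsi; apply/forall_inP => y; apply: chainPsi.
apply/forallP => x; apply/implyP => /andP[Dx /forall_inP cmpx].
have [y yPsi /esym rkxy] := rkPsi _ (poly_rk_le Dx).
by rewrite (@comparable_rk_inj x y) //; [apply: facePsi | apply: cmpx].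
Qed.

Definition open_section y y' :=
  [set z | [&& D z, le y z, le z y', z != y & z != y']].

Lemma flag_open_section Psi y z y' i : flag Psi -> y \in Psi -> z \in Psi ->
  y' \in Psi -> rk y = i -> rk z = i.+1 -> rk y' = i.+2 -> z \in open_section y y'.
Proof.
move=> flagPsi yPsi zPsi y'Psi rky rkz rky'.
have [[Dy Dz] Dy'] := (flag_face flagPsi yPsi, flag_face flagPsi zPsi,
                     flag_face flagPsi y'Psi).
rewrite inE Dz (comparable_le Dy Dz) ?(flag_comparable flagPsi yPsi zPsi) ?rky ?rkz //.
rewrite (comparable_le Dz Dy') ?(flag_comparable flagPsi zPsi y'Psi) ?rkz ?rky' //=.
by apply/andP; split; apply/eqP => ezy; move: rkz; rewrite ezy ?rky ?rky' => /eqP;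
  rewrite ?(ltn_eqF (ltnSn _)) ?(gtn_eqF (ltnSn _)).
Qed.

Lemma card_open_section Psi y y' i : flag Psi -> y \in Psi -> y' \in Psi ->
  rk y = i -> rk y' = i.+2 -> #|open_section y y'| = 2.
Proof.
move=> flagPsi yPsi y'Psi rky rky'.
have Dy := flag_face flagPsi yPsi; have Dy' := flag_face flagPsi y'Psi.
apply: (poly_diamond Dy Dy'); last by rewrite rky rky'.
rewrite (comparable_le Dy Dy') ?(flag_comparable flagPsi yPsi y'Psi) // rky rky'.
exact: leqW (leqnSn i).
Qed.

Lemma open_section_rk y y' b i : D y -> D y' -> b \in open_section y y' ->
  rk y = i -> rk y' = i.+2 -> rk b = i.+1.
Proof.
move=> Dy Dy'; rewrite inE => /and5P[Db leyb leby' nby nby'] rky rky'.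
have := poly_rk_lt Dy Db leyb; rewrite eq_sym rky => /(_ nby) ltib.
have := poly_rk_lt Db Dy' leby' nby'; rewrite rky' ltnS => lebi.
by apply/eqP; rewrite eqn_leq ltib lebi.
Qed.

Definition agree_off r (Psi1 Psi2 : {set F}) :=
  forall x, rk x != r -> (x \in Psi1) = (x \in Psi2).

Lemma flag_agree_eq Psi1 Psi2 r b : flag Psi1 -> flag Psi2 ->
  agree_off r Psi1 Psi2 -> b \in Psi1 -> b \in Psi2 -> rk b = r -> Psi1 = Psi2.
Proof.
move=> flag1 flag2 agree12 b1 b2 rkb; apply/setP => x.
have [rkx|] := eqVneq (rk x) r; last exact: agree12.
apply/idP/idP => xPsi.
  by rewrite (flag_rk_inj flag1 xPsi b1) // rkb.
by rewrite (flag_rk_inj flag2 xPsi b2) // rkb.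
Qed.

Lemma open_section_comparable Psi y y' b z i : flag Psi -> y \in Psi ->
  y' \in Psi -> rk y = i -> rk y' = i.+2 -> b \in open_section y y' ->
  z \in Psi -> rk z != i.+1 -> le z b || le b z.
Proof.
move=> flagPsi yPsi y'Psi rky rky' bS zPsi rkz.
have Dy := flag_face flagPsi yPsi; have Dy' := flag_face flagPsi y'Psi.
have Dz := flag_face flagPsi zPsi.
move: bS; rewrite inE => /and5P[Db leyb leby' _ _].
rewrite neq_ltn in rkz; case/orP: rkz => [ltz|gtz].
  rewrite (poly_le_trans Dz Dy Db _ leyb) //.
  by rewrite (comparable_le Dz Dy) ?(flag_comparable flagPsi zPsi yPsi) // rky -ltnS.
rewrite orbC (poly_le_trans Db Dy' Dz leby') //.
by rewrite (comparable_le Dy' Dz) ?(flag_comparable flagPsi y'Psi zPsi) // rky'.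
Qed.

(* The exchanged flag swaps the face of rank [i.+1] for the other face of the
   diamond between its neighbours of ranks [i] and [i.+2]. *)
Lemma exists_exch i Psi : i < n -> flag Psi ->
  exists Psi' : {set F}, [&& flag Psi', Psi' != Psi &
       [forall x, (rk x != i.+1) ==> ((x \in Psi') == (x \in Psi))]].
Proof.
move=> ltin flagPsi.
have [y yPsi rky] := flag_face_rk flagPsi (leqW (ltnW ltin)).
have [a aPsi rka] := flag_face_rk (r := i.+1) flagPsi (ltnW ltin).
have [y' y'Psi rky'] := flag_face_rk (r := i.+2) flagPsi ltin.
have aS := flag_open_section flagPsi yPsi aPsi y'Psi rky rka rky'.
have [b bS nba] := cards2_other (card_open_section flagPsi yPsi y'Psi rky rky') aS.
have Db : D b by move: bS; rewrite inE => /andP[].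
have rkb := open_section_rk (flag_face flagPsi yPsi) (flag_face flagPsi y'Psi)
  bS rky rky'.
have cmpb := open_section_comparable flagPsi yPsi y'Psi rky rky' bS.
have bPsiN : b \notin Psi.
  by apply: contra nba => bPsi; rewrite (flag_rk_inj flagPsi bPsi aPsi) ?rka.
have PsiD1 z : z \in Psi -> rk z != i.+1 -> z \in Psi :\ a.
  by move=> zPsi; rewrite !inE zPsi andbT; apply: contraNneq => ->; rewrite rka.
exists (b |: (Psi :\ a)); apply/and3P; split.
- apply: chain_flag => [z|z w|r ler].
  + by rewrite !inE => /predU1P[->|/andP[_ /(flag_face flagPsi)]].
  + have cmpb' u : u \in Psi :\ a -> le u b || le b u.
      rewrite !inE => /andP[nua uPsi]; apply: (cmpb _ uPsi).
      by apply: contra nua => /eqP rku; rewrite (flag_rk_inj flagPsi uPsi aPsi) ?rku.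
    rewrite !in_setU1 => /predU1P[->|zPsi] /predU1P[->|wPsi].
    * by rewrite orbb (poly_le_refl Db).
    * by rewrite orbC cmpb'.
    * exact: cmpb'.
    * by move: zPsi wPsi; rewrite !inE => /andP[_ zPsi] /andP[_ wPsi];
        exact: flag_comparable flagPsi zPsi wPsi.
  + have [->|rne] := eqVneq r i.+1; first by exists b; rewrite ?setU11.
    have [z zPsi rkz] := flag_face_rk flagPsi ler.
    by exists z; rewrite // setU1r // PsiD1 // rkz.
- by apply: contraNneq bPsiN => <-; rewrite setU11.
- apply/forallP => x; apply/implyP => rkx; apply/eqP.
  rewrite !inE; have [exb|_] := eqVneq x b; first by rewrite exb rkb eqxx in rkx.
  by have [exa|] := eqVneq x a; first by rewrite exa rka eqxx in rkx.
Qed.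

Lemma exchP i Psi : i < n -> flag Psi ->
  [/\ flag (exch D le rk i Psi), exch D le rk i Psi != Psi &
      agree_off i.+1 (exch D le rk i Psi) Psi].
Proof.
move=> ltin flagPsi; rewrite /exch.
case: pickP => [Psi' /and3P[? ? /forallP agree']|none].
  by split => // x /(implyP (agree' x))/eqP.
by have [Psi'] := exists_exch ltin flagPsi; rewrite none.
Qed.

Lemma exch_uniq i Psi Psi1 Psi2 : i < n -> flag Psi -> flag Psi1 -> flag Psi2 ->
  Psi1 != Psi -> Psi2 != Psi -> agree_off i.+1 Psi1 Psi ->
  agree_off i.+1 Psi2 Psi -> Psi1 = Psi2.
Proof.
move=> ltin flagPsi flag1 flag2 neq1 neq2 agree1 agree2.
have [y yPsi rky] := flag_face_rk flagPsi (leqW (ltnW ltin)).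
have [a aPsi rka] := flag_face_rk (r := i.+1) flagPsi (ltnW ltin).
have [y' y'Psi rky'] := flag_face_rk (r := i.+2) flagPsi ltin.
have rkyN : rk y != i.+1 by rewrite rky ltn_eqF.
have rky'N : rk y' != i.+1 by rewrite rky' gtn_eqF.
have inS Psi' : flag Psi' -> Psi' != Psi -> agree_off i.+1 Psi' Psi ->
    exists2 b, b \in Psi' & [/\ b \in open_section y y', a != b & rk b = i.+1].
  move=> flag' neq' agree'.
  have [b bPsi' rkb] := flag_face_rk (r := i.+1) flag' (ltnW ltin).
  exists b => //; split => //.
    by rewrite (flag_open_section flag' _ bPsi' _ rky rkb rky') ?agree'.
  apply: contra neq' => /eqP eab; apply/eqP.
  by apply: (flag_agree_eq flag' flagPsi agree' bPsi'); rewrite -?eab.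
have [b1 b1Psi1 [b1S nab1 rkb1]] := inS _ flag1 neq1 agree1.
have [b2 b2Psi2 [b2S nab2 _]] := inS _ flag2 neq2 agree2.
have aS := flag_open_section flagPsi yPsi aPsi y'Psi rky rka rky'.
have eb12 := cards2_neq_eq (card_open_section flagPsi yPsi y'Psi rky rky')
  aS b1S b2S nab1 nab2.
apply: (flag_agree_eq flag1 flag2 _ b1Psi1 _ rkb1); last by rewrite eb12.
by move=> x rkx; rewrite agree1 // agree2.
Qed.

Lemma flag_card_rk_lt Psi k : flag Psi -> k <= n.+2 ->
  #|[set z in Psi | rk z < k]| = k.
Proof.
move=> flagPsi; elim: k => [_|k IHk ltkn].
  by apply: eq_card0 => z; rewrite !inE ltn0 andbF.
have [x xPsi rkx] := flag_face_rk flagPsi ltkn.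
have -> : [set z in Psi | rk z < k.+1] = x |: [set z in Psi | rk z < k].
  apply/setP => z; rewrite !inE ltnS leq_eqVlt.
  have [->|nzx] := eqVneq z x; first by rewrite xPsi rkx eqxx.
  apply: andb_id2l => zPsi; have [rkz|//] := eqVneq (rk z) k.
  have ezx := flag_rk_inj flagPsi zPsi xPsi (etrans rkz (esym rkx)).
  by rewrite ezx eqxx in nzx.
by rewrite cardsU1 (IHk (ltnW ltkn)) inE rkx ltnn andbF.
Qed.

(* Ranks are not part of the structure preserved by automorphisms; counting the
   faces of a flag below a face is how they are seen to be invariant. *)
Definition below (Psi : {set F}) x := [set z in Psi | le z x && (z != x)].

Lemma flag_card_below Psi x : flag Psi -> x \in Psi -> #|below Psi x| = rk x.
Proof.
move=> flagPsi xPsi; have Dx := flag_face flagPsi xPsi.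
rewrite -(flag_card_rk_lt flagPsi (leqW (poly_rk_le Dx))).
apply: eq_card => z; rewrite !inE; apply: andb_id2l => zPsi.
have Dz := flag_face flagPsi zPsi.
apply/andP/idP => [[lezx nzx]|ltzx]; first exact: poly_rk_lt.
split; last by apply: contraTneq ltzx => ->; rewrite ltnn.
exact: comparable_le Dz Dx (flag_comparable flagPsi zPsi xPsi) (ltnW ltzx).
Qed.

Section Automorphism.
Variable f : F -> F.
Hypothesis autf : is_aut D le f.

Lemma aut_face x : D x -> D (f x).
Proof. by case: autf => _ + _ _; apply. Qed.

Lemma aut_inj : {in D &, injective f}.
Proof. by case: autf. Qed.

Lemma aut_le x y : D x -> D y -> le (f x) (f y) = le x y.
Proof. by case: autf => _ _ _; apply. Qed.

Lemma aut_flag Psi : flag Psi -> flag (f @: Psi).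
Proof.
move=> flagPsi; apply/and3P; split.
- by apply/forall_inP => _ /imsetP[x xPsi ->]; exact/aut_face/(flag_face flagPsi).
- apply/forall_inP => _ /imsetP[x xPsi ->]; apply/forall_inP => _ /imsetP[y yPsi ->].
  have [Dx Dy] := (flag_face flagPsi xPsi, flag_face flagPsi yPsi).
  by rewrite !aut_le // (flag_comparable flagPsi).
apply/forallP => y; apply/implyP => /andP[Dy /forall_inP cmpy].
case: autf => _ _ /(_ y Dy)[x Dx fxy] _; subst y; apply: imset_f.
apply/(flag_maximal flagPsi Dx) => z zPsi.
have Dz := flag_face flagPsi zPsi.
by have := cmpy _ (imset_f f zPsi); rewrite !aut_le.
Qed.

Lemma mem_aut_imset Psi x : flag Psi -> D x -> (f x \in f @: Psi) = (x \in Psi).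
Proof.
move=> flagPsi Dx; apply/imsetP/idP => [[y yPsi /aut_inj]|]; last by exists x.
by move=> /(_ Dx (flag_face flagPsi yPsi)) ->.
Qed.

Lemma aut_imset_inj Psi1 Psi2 : flag Psi1 -> flag Psi2 -> f @: Psi1 = f @: Psi2 ->
  Psi1 = Psi2.
Proof.
move=> flag1 flag2 eq12; apply/setP => x; apply/idP/idP => xPsi.
  by rewrite -(mem_aut_imset flag2 (flag_face flag1 xPsi)) -eq12 imset_f.
by rewrite -(mem_aut_imset flag1 (flag_face flag2 xPsi)) eq12 imset_f.
Qed.

Lemma aut_below Psi x : flag Psi -> x \in Psi ->
  below (f @: Psi) (f x) = f @: below Psi x.
Proof.
move=> flagPsi xPsi; have Dx := flag_face flagPsi xPsi.
apply/setP => z; apply/idP/imsetP => [|[y + ->]].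
  rewrite inE => /andP[/imsetP[y yPsi ->]]; have Dy := flag_face flagPsi yPsi.
  by rewrite aut_le // (inj_in_eq aut_inj) // => lexy; exists y; rewrite // inE yPsi.
rewrite !inE => /andP[yPsi]; have Dy := flag_face flagPsi yPsi.
by rewrite imset_f // aut_le // (inj_in_eq aut_inj).
Qed.

Lemma aut_rk Psi x : flag Psi -> x \in Psi -> rk (f x) = rk x.
Proof.
move=> flagPsi xPsi.
rewrite -(flag_card_below (aut_flag flagPsi) (imset_f f xPsi)) aut_below //.
rewrite -(flag_card_below flagPsi xPsi); apply: card_in_imset => y z.
rewrite !inE => /andP[yPsi _] /andP[zPsi _].
exact: aut_inj (flag_face flagPsi yPsi) (flag_face flagPsi zPsi).
Qed.

Lemma aut_exch i Psi : i < n -> flag Psi ->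
  f @: exch D le rk i Psi = exch D le rk i (f @: Psi).
Proof.
move=> ltin flagPsi.
have [flagE neqE agreeE] := exchP ltin flagPsi.
have [flagE' neqE' agreeE'] := exchP ltin (aut_flag flagPsi).
apply: (exch_uniq ltin (aut_flag flagPsi) (aut_flag flagE) flagE' _ neqE' _ agreeE').
  by apply: contra neqE => /eqP/aut_imset_inj-> //; apply: aut_flag.
move=> z rkz; apply/imsetP/imsetP => -[y yPsi ezy]; subst z; exists y => //.
  by rewrite -agreeE // -(aut_rk flagE yPsi).
by rewrite agreeE // -(aut_rk flagPsi yPsi).
Qed.

End Automorphism.

End Polytope.

Local Open Scope group_scope.

Section GroupFacts.
Variable gT : finGroupType.

Lemma gen_mul_ind (A : {set gT}) (P : gT -> Prop) : P 1 ->
  (forall v a, v \in <<A>> -> P v -> a \in A -> P (v * a)) ->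
  forall w, w \in <<A>> -> P w.
Proof.
move=> P1 Pmul w /gen_prodgP[m [c cA ->]]; elim: m c cA => [|m IHm] c cA.
  by rewrite big_ord0.
rewrite big_ord_recr /=; apply: Pmul => //; last exact: IHm.
by apply: group_prod => i _; apply: mem_gen.
Qed.

Lemma lcoset_meet_conjg (N H : {group gT}) (u g : gT) :
  u * g \in N :* u * H -> g *: H :&: N :^ u != set0.
Proof.
case/mulsgP => _ h /rcosetP[m Nm ->] Hh ugE; apply/set0Pn; exists (g * h^-1).
rewrite inE mem_lcoset mulKg groupV Hh /=.
suff -> : g * h^-1 = m ^ u by rewrite memJ_conjg.
by rewrite /conjg -[g](mulKg u) ugE !mulgA mulgK.
Qed.
End GroupFacts.

Section CosetModel.
Variables (gT : finGroupType) (n : nat) (W N : {group gT}) (s : 'I_n -> gT)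
  (act : {set qface gT n} -> gT -> {set qface gT n}).
Hypothesis W_gen : W :=: <<[set s i | i : 'I_n]>>.
Hypothesis polyP : is_polytope (qD W N s) (qle W N s) (@qrk gT n) n.
Hypothesis actP : flag_action W N s act.
Hypothesis N_stab : N :=: [set w in W | act (base_flag W N s) w == base_flag W N s].

Local Notation flag := (is_flag (qD W N s) (qle W N s)).
Local Notation rk := (@qrk gT n).
Local Notation exchange := (exch (qD W N s) (qle W N s) rk).
Local Notation faceset := (faceset W N s).
Local Notation Phi := (base_flag W N s).

Lemma mem_s_W i : s i \in W.
Proof. by rewrite W_gen mem_gen ?imset_f. Qed.

Lemma Hgen_subW i : Hgen s i \subset W.
Proof. by rewrite gen_subG; apply/subsetP => _ /imsetP[k _ ->]; apply: mem_s_W. Qed.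

Lemma act_flag Psi w : flag Psi -> w \in W -> flag (act Psi w).
Proof. by case: actP => + _ _ _; apply. Qed.

Lemma act1 Psi : flag Psi -> act Psi 1 = Psi.
Proof. by case: actP => _ + _ _; apply. Qed.

Lemma actM Psi v w : flag Psi -> v \in W -> w \in W ->
  act Psi (v * w) = act (act Psi v) w.
Proof. by case: actP => _ _ + _; apply. Qed.

Lemma act_s Psi i : flag Psi -> act Psi (s i) = exchange i Psi.
Proof. by case: actP => _ _ _; apply. Qed.

Lemma N_subW : N \subset W.
Proof. by rewrite N_stab; apply/subsetP => w; rewrite inE => /andP[]. Qed.

Lemma act_base_N m : m \in N -> act Phi m = Phi.
Proof. by rewrite N_stab inE => /andP[_ /eqP]. Qed.

Lemma Hr_group r : exists K : {group gT}, Hr W s r = K.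
Proof.
rewrite /Hr; case: ifP => _; last by exists W.
by exists <<[set s k | k : 'I_n & val k != r.-1]>>%G.
Qed.

Lemma faceset_mulr r v g : g \in Hr W s r -> faceset r (v * g) = faceset r v.
Proof.
rewrite /Defs.faceset; have [K ->] := Hr_group r => Kg.
by rewrite rcosetM -mulgA lcoset_id.
Qed.

Lemma mem_faceset r w : w \in faceset r w.
Proof.
rewrite /Defs.faceset; have [K ->] := Hr_group r.
by rewrite -{1}[w]mulg1 mem_mulg ?rcoset_refl.
Qed.

Lemma Hr_Hgen (i : 'I_n) (r : 'I_n.+2) : val r = i.+1 -> Hr W s r = Hgen s i.
Proof. by move=> ri; rewrite /Hr ri ltn_ord. Qed.

Lemma mem_s_Hr (i : 'I_n) (r : 'I_n.+2) : val r != i.+1 -> s i \in Hr W s r.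
Proof.
rewrite /Hr; case: ifP => [/andP[r_gt0 _] nri | _ _]; last exact: mem_s_W.
by rewrite mem_gen // imset_f // inE -eqSS prednK // eq_sym.
Qed.

Definition coset_flag w : {set qface gT n} := [set x | x.2 == faceset x.1 w].

Lemma coset_flagP w : w \in W -> flag (coset_flag w).
Proof.
move=> Ww; apply: (chain_flag polyP) => [x|x y|r ler].
- by rewrite inE /qD => xw; apply/exists_inP; exists w.
- rewrite !inE /qle => xw yw; apply/orP.
  by case: (leqP x.1 y.1) => [lexy|/ltnW leyx]; [left|right];
    rewrite ?lexy ?leyx /=; apply/exists_inP; exists w; rewrite ?xw ?yw.
- exists (inord r, faceset (inord r) w); first by rewrite inE.
  by rewrite /qrk /= inordK.
Qed.

Lemma act_Hgen_rk i h Psi x : h \in Hgen s i -> flag Psi -> rk x = i.+1 ->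
  (x \in act Psi h) = (x \in Psi).
Proof.
move=> + flagPsi rkx; move: h; apply: gen_mul_ind => [|v a Hv IHv /imsetP[k]].
  by rewrite act1.
rewrite inE => nki ->; have Wv := subsetP (Hgen_subW i) v Hv.
have [_ _ agreeE] := exchP polyP (ltn_ord k) (act_flag flagPsi Wv).
by rewrite actM ?mem_s_W // act_s ?act_flag // agreeE // rkx eqSS eq_sym.
Qed.

Lemma base_flagP : flag Phi.
Proof. exact: coset_flagP (group1 W). Qed.

(* [s k] does not lie in [N^v H_k]: otherwise [Phi^(v s_k)] would keep the face
   of rank [k.+1] of [Phi^v], while it is the [k]-adjacent flag of [Phi^v]. *)
Lemma faceset_s_neq v (k : 'I_n) (r : 'I_n.+2) : v \in W -> val r = k.+1 ->
  faceset r (v * s k) != faceset r v.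
Proof.
move=> Wv rk_r; apply/eqP => eq_vsk.
have flagv := act_flag base_flagP Wv.
have [_ neqE agreeE] := exchP polyP (ltn_ord k) flagv.
have := mem_faceset r (v * s k); rewrite eq_vsk /Defs.faceset (Hr_Hgen rk_r).
case/mulsgP => _ h /rcosetP[m Nm ->] Hh vsk_eq.
have [Wm Wh] := (subsetP N_subW m Nm, subsetP (Hgen_subW k) h Hh).
have act_vsk : act Phi (v * s k) = act (act Phi v) h.
  by rewrite vsk_eq -mulgA actM ?groupM ?base_flagP // act_base_N // actM ?base_flagP.
suff : exchange k (act Phi v) = act Phi v by move/eqP; rewrite (negbTE neqE).
apply/setP => x; have [rkx|] := eqVneq (rk x) k.+1; last exact: agreeE.
by rewrite -act_s // -actM ?mem_s_W ?base_flagP // act_vsk (act_Hgen_rk Hh).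
Qed.

Lemma act_base_flag w : w \in W -> act Phi w = coset_flag w.
Proof.
rewrite W_gen; move: w; apply: gen_mul_ind => [|v a Gv IHv /imsetP[k _ ->]].
  exact: act1 base_flagP.
have Wv : v \in W by rewrite W_gen.
have [flagE neqE agreeE] := exchP polyP (ltn_ord k) (act_flag base_flagP Wv).
rewrite actM ?mem_s_W ?base_flagP // act_s ?act_flag ?base_flagP //.
rewrite IHv in flagE neqE agreeE *.
apply: (exch_uniq polyP (ltn_ord k) (coset_flagP Wv) flagE
          (coset_flagP (groupM Wv (mem_s_W k))) neqE _ agreeE).
  pose r : 'I_n.+2 := Ordinal (ltnW (ltn_ord k) : k.+1 < n.+2).
  apply: contraNneq (@faceset_s_neq v k r Wv erefl) => eq_vsk.
  have : (r, faceset r (v * s k)) \in coset_flag (v * s k) by rewrite inE.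
  by rewrite eq_vsk inE; apply.
by move=> x rkx; rewrite !inE faceset_mulr // mem_s_Hr.
Qed.

Lemma aut_act f Psi w : is_aut (qD W N s) (qle W N s) f -> flag Psi -> w \in W ->
  f @: act Psi w = act (f @: Psi) w.
Proof.
move=> autf flagPsi; have flagf := aut_flag autf flagPsi.
rewrite W_gen; move: w; apply: gen_mul_ind => [|v a Gv IHv /imsetP[k _ ->]].
  by rewrite !act1.
have Wv : v \in W by rewrite W_gen.
rewrite !actM ?mem_s_W // !act_s ?act_flag // -IHv.
exact: (aut_exch polyP autf (ltn_ord k) (act_flag flagPsi Wv)).
Qed.

Lemma coxeter_W c : coxeter s c -> c \in W.
Proof. by case=> p ->; apply: group_prod => i _; apply: mem_s_W. Qed.

Lemma petrie_act (p : {perm 'I_n}) Psi : flag Psi ->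
  petrie (qD W N s) (qle W N s) rk p Psi = act Psi (\prod_(k < n) s (p k)).
Proof.
rewrite /petrie [index_enum _]unlock -enumT.
elim: (enum 'I_n) Psi => [|k l IHl] Psi flagPsi /=; first by rewrite big_nil act1.
have Ws_l : \prod_(j <- l) s (p j) \in W by apply: group_prod => j _; apply: mem_s_W.
by rewrite IHl -?act_s ?act_flag ?mem_s_W // big_cons actM ?mem_s_W.
Qed.

Lemma iter_petrie_act (p : {perm 'I_n}) m Psi : flag Psi ->
  iter m (petrie (qD W N s) (qle W N s) rk p) Psi =
  act Psi ((\prod_(k < n) s (p k)) ^+ m).
Proof.
move=> flagPsi; have Wc : \prod_(k < n) s (p k) \in W by apply: coxeter_W; exists p.
elim: m => [|m IHm] /=; first by rewrite act1.
by rewrite IHm petrie_act ?act_flag ?groupX // -actM ?groupX // expgSr.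
Qed.

Lemma act_expg_subn Psi c a b : flag Psi -> c \in W -> a <= b ->
  act Psi (c ^+ a) = act Psi (c ^+ b) -> act Psi (c ^+ (b - a)) = Psi.
Proof.
move=> flagPsi Wc leab eq_ab.
have -> : c ^+ (b - a) = c ^+ b * (c ^+ a)^-1.
  by rewrite -{2}(subnK leab) expgD mulgK.
by rewrite actM ?groupV ?groupX // -eq_ab -actM ?groupV ?groupX // mulgV act1.
Qed.

Lemma card_orbit_cycle_gt Psi c d : flag Psi -> c \in W ->
  (forall m, 0 < m <= d -> act Psi (c ^+ m) != Psi) ->
  d < #|[set act Psi a | a in <[c]>]|.
Proof.
move=> flagPsi Wc aper.
have act_inj : injective (fun m : 'I_d.+1 => act Psi (c ^+ m)).
  suff lt_neq (m1 m2 : 'I_d.+1) : m1 < m2 -> act Psi (c ^+ m1) != act Psi (c ^+ m2).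
    move=> m1 m2 eq12; apply: val_inj.
    by case: (ltngtP m1 m2) => // /lt_neq; rewrite eq12 eqxx.
  move=> lt12; have aper21 : 0 < m2 - m1 <= d.
    by rewrite subn_gt0 lt12 (leq_trans (leq_subr _ _)) // -ltnS.
  apply: contraNneq (aper _ aper21).
  by move/(act_expg_subn flagPsi Wc (ltnW lt12)) ->.
rewrite -[d.+1]card_ord -(card_imset _ act_inj).
by apply/subset_leq_card/subsetP => _ /imsetP[m _ ->]; rewrite imset_f ?mem_cycle.
Qed.

Lemma common_face_lcoset w g x (i : 'I_n) : w \in W -> g \in W ->
  x \in act Phi w -> x \in act Phi (w * g) -> rk x = i.+1 ->
  g *: Hgen s i :&: N :^ w != set0.
Proof.
move=> Ww Wg xw xwg rkx.
rewrite !act_base_flag ?groupM // !inE in xw xwg.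
have := mem_faceset x.1 (w * g).
rewrite -(eqP xwg) (eqP xw) /Defs.faceset (Hr_Hgen rkx) /Hgen.
exact: lcoset_meet_conjg.
Qed.

Section OrbitRepresentatives.
Variables (r : nat) (u : 'I_r.+1 -> gT).
Hypothesis W_u : forall j, u j \in W.
Hypothesis u_orbit_reps : forall Psi, flag Psi ->
  exists j, same_aut_orbit (qD W N s) (qle W N s) (act Phi (u j)) Psi.
Hypothesis coset_cond : forall (i : 'I_n) (j : 'I_r.+1) c, coxeter s c ->
  forall k, 0 < k < #|[set act (act Phi (u j)) a | a in <[c]>]| ->
  (c ^+ k) *: Hgen s i :&: N :^ u j = set0.

Lemma coxeter_no_repeated_face Psi c d x : flag Psi -> coxeter s c -> 0 < d ->
  (forall m, 0 < m <= d -> act Psi (c ^+ m) != Psi) ->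
  0 < rk x <= n -> x \in Psi -> x \in act Psi (c ^+ d) -> False.
Proof.
move=> flagPsi coxc d_gt0 aper /andP[rkx_gt0 rkx_le] xPsi xPsid.
have Wc := coxeter_W coxc.
have [j [f autf fPsi]] := u_orbit_reps flagPsi.
have flag0 := act_flag base_flagP (W_u j).
have f_act m : f @: act (act Phi (u j)) (c ^+ m) = act Psi (c ^+ m).
  by rewrite aut_act ?groupX // fPsi.
have aper0 m : 0 < m <= d -> act (act Phi (u j)) (c ^+ m) != act Phi (u j).
  by move/aper; apply: contra => /eqP eq0; rewrite -f_act eq0 fPsi.
have [a aPsi0 xE] : exists2 a, a \in act Phi (u j) & x = f a.
  by apply/imsetP; rewrite fPsi.
have ad : a \in act Phi (u j * c ^+ d).
  rewrite actM ?base_flagP ?W_u ?groupX //.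
  by rewrite -(mem_aut_imset autf (act_flag flag0 (groupX d Wc)) (flag_face flag0 aPsi0))
    f_act -xE.
have rka : rk a = (rk x).-1.+1 by rewrite prednK // xE (aut_rk polyP autf flag0 aPsi0).
have ltin : (rk x).-1 < n by rewrite -ltnS prednK.
have := common_face_lcoset (i := Ordinal ltin) (W_u j) (groupX d Wc) aPsi0 ad rka.
by rewrite coset_cond ?eqxx // d_gt0 card_orbit_cycle_gt.
Qed.

Lemma acoptic_of_coset_cond : acoptic (qD W N s) (qle W N s) rk n.
Proof.
move=> Psi flagPsi p k k' ltkk' aper x _ rkx xk xk'.
have coxc : coxeter s (\prod_(i < n) s (p i)) by exists p.
have Wc := coxeter_W coxc.
rewrite !iter_petrie_act // in xk xk'.
apply: (coxeter_no_repeated_face (d := k' - k) (act_flag flagPsi (groupX k Wc))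
          coxc _ _ rkx xk); first by rewrite subn_gt0.
  move=> m /andP[m_gt0 le_m]; apply: contra (aper m _) => [/eqP eq_m|].
    rewrite -actM ?groupX // -expgD in eq_m.
    have := act_expg_subn flagPsi Wc (leq_addr m k) (esym eq_m).
    by rewrite addKn iter_petrie_act // => ->.
  by rewrite m_gt0 (leq_trans le_m) ?leq_subr.
by rewrite -actM ?groupX // -expgD subnKC // ltnW.
Qed.

End OrbitRepresentatives.

End CosetModel.

Theorem theorem7 (gT : finGroupType) (n : nat) (W N : {group gT})
    (s : 'I_n -> gT)
    (act : {set qface gT n} -> gT -> {set qface gT n})
    (r : nat) (u : 'I_r.+1 -> gT) :
  string_C_group W s ->
  is_polytope (qD W N s) (qle W N s) (@qrk gT n) n ->
  flag_action W N s act ->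
  N :=: [set w in W | act (base_flag W N s) w == base_flag W N s] ->
  u ord0 = 1 ->
  (forall j, u j \in W) ->
  (forall Psi, is_flag (qD W N s) (qle W N s) Psi ->
     exists j, same_aut_orbit (qD W N s) (qle W N s)
                 (act (base_flag W N s) (u j)) Psi) ->
  (forall j j', same_aut_orbit (qD W N s) (qle W N s)
                 (act (base_flag W N s) (u j))
                 (act (base_flag W N s) (u j')) -> j = j') ->
  (forall (i : 'I_n) (j : 'I_r.+1) (c : gT), coxeter s c ->
     forall k : nat,
       (0 < k < #|[set act (act (base_flag W N s) (u j)) a | a in <[c]>]|)%N ->
       (c ^+ k) *: Hgen s i :&: N :^ u j = set0) ->
  acoptic (qD W N s) (qle W N s) (@qrk gT n) n.
Proof.
case=> W_gen _ _ _ _ polyP actP N_stab _ W_u u_orbit_reps _ coset_cond.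
exact: (acoptic_of_coset_cond W_gen polyP actP N_stab W_u u_orbit_reps coset_cond).
Qed.
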